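(* Let $(X,d)$ be a $\delta$-hyperbolic space and $\gamma$ a hyperbolic isometry of $X$ with $\ell(\gamma)>3\delta$. Then (i) every point $x\in M_{\min}(\gamma)$ satisfies $d(x,M(\gamma))\le\frac72\delta$; (ii) every point $x\in M(\gamma)$ satisfies $d(x,M_{\min}(\gamma))\le\frac{15}{2}\delta$.
   Context: A metric space is $\delta$-hyperbolic if it is proper, geodesic, and every geodesic triangle is $\delta$-thin (any two points of the triangle identified by the canonical tripod approximation of the triangle, which is isometric on each side, are at distance $\le\delta$). An isometry $\gamma$ is hyperbolic if $k\mapsto\gamma^kx$ is a quasi-isometric embedding $\mathbf Z\to X$; its extension to the ideal (Gromov) boundary $\partial X$ then has exactly two fixed points $\gamma^+=\lim_{p\to+\infty}\gamma^px$ and $\gamma^-=\lim_{p\to+\infty}\gamma^{-p}x$. $\ell(\gamma)=\lim_{k\to\infty}\frac1kd(x,\gamma^kx)$ is the asymptotic displacement and $s(\gamma)=\inf_{x\in X}d(x,\gamma x)$ the minimal displacement. $M(\gamma)$ is the union of all geodesic lines $c$ with $c(-\infty)=\gamma^-$ and $c(+\infty)=\gamma^+$, and $M_{\min}(\gamma)$ is the (nonempty, closed) set of points $x$ where $x\mapsto d(x,\gamma x)$ attains its infimum $s(\gamma)$. *)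

From Stdlib Require Import Reals Lra ZArith.
Open Scope R_scope.

Record metric (X : Type) (d : X -> X -> R) : Prop := {
  d_nonneg : forall x y, 0 <= d x y;
  d_sep : forall x y, d x y = 0 <-> x = y;
  d_sym : forall x y, d x y = d y x;
  d_tri : forall x y z, d x z <= d x y + d y z }.

Definition gromov_product {X} (d : X -> X -> R) (o y z : X) : R :=
  (d o y + d o z - d y z) / 2.

Definition geodesic_segment {X} (d : X -> X -> R) (x y : X) (c : R -> X) : Prop :=
  c 0 = x /\ c (d x y) = y /\
  forall s t, 0 <= s <= d x y -> 0 <= t <= d x y -> d (c s) (c t) = Rabs (s - t).

Definition geodesic_space {X} (d : X -> X -> R) : Prop :=
  forall x y, exists c, geodesic_segment d x y c.

(* proper: closed balls are compact (sequential compactness, equivalent in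
   metric spaces): every bounded sequence has a convergent subsequence. *)
Definition proper_space {X} (d : X -> X -> R) : Prop :=
  forall (a : nat -> X) (o : X) (r : R), (forall n, d o (a n) <= r) ->
  exists (phi : nat -> nat) (y : X),
    (forall n, (phi n < phi (S n))%nat) /\
    Un_cv (fun n => d (a (phi n)) y) 0.

(* every geodesic triangle is delta-thin: the tripod map identifies the point
   at distance t from x on [x,y] with the point at distance t from x on [x,z],
   for 0 <= t <= (y|z)_x (and similarly at the other vertices, which is covered
   by quantifying over all vertices). *)
Definition delta_thin {X} (d : X -> X -> R) (delta : R) : Prop :=
  forall x y z c1 c2, geodesic_segment d x y c1 -> geodesic_segment d x z c2 ->
  forall t, 0 <= t <= gromov_product d x y z -> d (c1 t) (c2 t) <= delta.

Definition hyperbolic_space {X} (d : X -> X -> R) (delta : R) : Prop :=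
  metric X d /\ proper_space d /\ geodesic_space d /\ delta_thin d delta.

Definition is_isometry {X} (d : X -> X -> R) (g : X -> X) : Prop :=
  forall x y, d (g x) (g y) = d x y.

(* integer powers of g, with ginv the inverse of g *)
Definition zpow {X} (g ginv : X -> X) (k : Z) (x : X) : X :=
  match k with
  | Z0 => x
  | Zpos p => Nat.iter (Pos.to_nat p) g x
  | Zneg p => Nat.iter (Pos.to_nat p) ginv x
  end.

Definition hyperbolic_isometry {X} (d : X -> X -> R) (g ginv : X -> X) : Prop :=
  exists (x : X) (lam C : R), 1 <= lam /\ 0 <= C /\
  forall k l : Z,
    / lam * Rabs (IZR (k - l)) - C <= d (zpow g ginv k x) (zpow g ginv l x) /\
    d (zpow g ginv k x) (zpow g ginv l x) <= lam * Rabs (IZR (k - l)) + C.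

(* two sequences converge to the same point of the Gromov boundary:
   (a_n | b_m)_o -> +oo as n, m -> oo *)
Definition same_limit {X} (d : X -> X -> R) (a b : nat -> X) : Prop :=
  exists o : X, forall K : R, exists N : nat, forall n m : nat,
    (N <= n)%nat -> (N <= m)%nat -> K <= gromov_product d o (a n) (b m).

Definition geodesic_line {X} (d : X -> X -> R) (c : R -> X) : Prop :=
  forall s t, d (c s) (c t) = Rabs (s - t).

(* c is a geodesic line with c(-oo) = g^- and c(+oo) = g^+ *)
Definition axis_line {X} (d : X -> X -> R) (g ginv : X -> X) (c : R -> X) : Prop :=
  geodesic_line d c /\
  same_limit d (fun n => c (INR n)) (fun n => Nat.iter n g (c 0)) /\
  same_limit d (fun n => c (- INR n)) (fun n => Nat.iter n ginv (c 0)).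

Definition in_M {X} (d : X -> X -> R) (g ginv : X -> X) (x : X) : Prop :=
  exists c, axis_line d g ginv c /\ exists t, c t = x.

Definition in_Mmin {X} (d : X -> X -> R) (g : X -> X) (x : X) : Prop :=
  forall y, d x (g x) <= d y (g y).

(* d(x, A) <= r, with d(x, A) = inf_{a in A} d(x, a) *)
Definition dist_set_le {X} (d : X -> X -> R) (A : X -> Prop) (x : X) (r : R) : Prop :=
  forall eps, 0 < eps -> exists a, A a /\ d x a < r + eps.

From Stdlib Require Import Reals Lra Lia ZArith.
From Stdlib Require Import ClassicalEpsilon Classical Cantor.
Open Scope R_scope.

(* Let [x] be almost minimally displaced, with displacement [s > 3 delta + eps].
   Thin triangles and a corner-cutting argument (a shortcut near [h^k x] would give a
   point displaced by less than [s - eps]) show that consecutive orbit points are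
   almost aligned and that, seen from [x], the negative and positive orbits diverge
   after [3 delta / 2 + eps / 2].  Hence the orbit grows linearly, orbit points lie
   near geodesics between orbit points, and such geodesics lie near the broken line
   [U_k h^k [x, h x]].
   (i) For [x] minimal, geodesics [x_{-n} x_n] recentred at the projection of [x]
   have, by properness, a subsequence converging to a geodesic line through the
   [5 delta / 2]-ball of [x]; its ends converge to [h^+] and [h^-], so it is an axis.
   (ii) Properness and the previous estimates give a minimal point [y0]; a point of
   an axis is the middle of a long geodesic whose ends are far on the sides of
   [y_N] and [y_{-N}], so it is [13 delta / 2]-close to the broken line through the
   orbit of [y0], whose points are minimal.
   Both bounds are better than the required [7 delta / 2] and [15 delta / 2]. *)

Lemma Rabs_le_sub (s t : R) : s <= t -> Rabs (s - t) = t - s.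
Proof. intros; rewrite Rabs_left1; lra. Qed.

Lemma Rabs_le_inv (a b : R) : Rabs a <= b -> - b <= a <= b.
Proof.
  intros H. destruct (Rcase_abs a) as [Ha|Ha];
    [rewrite Rabs_left in H|rewrite Rabs_right in H]; lra.
Qed.

Lemma le_by_eps (a b : R) : (forall e, 0 < e -> a <= b + e) -> a <= b.
Proof.
  intros H. destruct (Rle_or_lt a b); auto. specialize (H ((a - b)/2) ltac:(lra)). lra.
Qed.

Lemma eq_by_eps (a b : R) : (forall e, 0 < e -> Rabs (a - b) <= e) -> a = b.
Proof.
  intros H. destruct (Req_dec a b) as [E|E]; auto. exfalso.
  assert (0 < Rabs (a - b)) by (apply Rabs_pos_lt; lra).
  specialize (H (Rabs (a - b) / 2) ltac:(lra)). lra.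
Qed.

(* The minimum of three reals, in a form directly usable by [lra]. *)
Lemma Rmin3_spec (a b c : R) :
  Rmin a (Rmin b c) <= a /\ Rmin a (Rmin b c) <= b /\ Rmin a (Rmin b c) <= c /\
  (Rmin a (Rmin b c) = a \/ Rmin a (Rmin b c) = b \/ Rmin a (Rmin b c) = c).
Proof. unfold Rmin. repeat destruct Rle_dec; lra. Qed.

Lemma nat_above (r : R) : exists N : nat, forall n, (N <= n)%nat -> r <= INR n.
Proof.
  destruct (archimed r) as [H _]. exists (Z.to_nat (up r)). intros n Hn.
  rewrite INR_IZR_INZ. assert (IZR (up r) <= IZR (Z.of_nat n)) by (apply IZR_le; lia). lra.
Qed.

Lemma inv_small (e : R) : 0 < e -> exists N : nat, forall n, (N <= n)%nat -> / INR (S n) < e.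
Proof.
  intros He. destruct (nat_above (/ e)) as [N HN]. exists N. intros n Hn.
  specialize (HN n Hn). rewrite S_INR.
  rewrite <- (Rinv_inv e). apply Rinv_lt_contravar.
  - apply Rmult_lt_0_compat; [apply Rinv_0_lt_compat; lra|pose proof (pos_INR n); lra].
  - lra.
Qed.

Lemma inf_exists {X} (F : X -> R) (y0 : X) : (forall y, 0 <= F y) ->
  exists s0, (forall y, s0 <= F y) /\ (forall e, 0 < e -> exists y, F y < s0 + e).
Proof.
  intros HF. set (E := fun r => exists y, r = - F y).
  destruct (completeness E) as [m [Hub Hlub]].
  { exists 0. intros r [y ->]. specialize (HF y). lra. }
  { exists (- F y0). exists y0. reflexivity. }
  exists (- m). split.
  - intro y. assert (- F y <= m) by (apply Hub; exists y; reflexivity). lra.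
  - intros e He. apply NNPP. intro Hno.
    assert (Hb : is_upper_bound E (m - e)).
    { intros r [y ->]. apply Rnot_lt_le. intro Hy. apply Hno. exists y. lra. }
    specialize (Hlub _ Hb). lra.
Qed.

Definition clamp (D v : R) : R := Rmax 0 (Rmin v D).

Lemma clamp_range D v : 0 <= D -> 0 <= clamp D v <= D.
Proof. intros. unfold clamp, Rmax, Rmin. repeat destruct Rle_dec; lra. Qed.

Lemma clamp_id D v : 0 <= v <= D -> clamp D v = v.
Proof. intros. unfold clamp, Rmax, Rmin. repeat destruct Rle_dec; lra. Qed.

Lemma clamp_lip D a b : 0 <= D -> Rabs (clamp D a - clamp D b) <= Rabs (a - b).
Proof.
  intros. unfold clamp, Rmax, Rmin. apply Rabs_le.
  destruct (Rcase_abs (a - b)) as [Hab|Hab]; [rewrite Rabs_left|rewrite Rabs_right]; auto;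
  repeat destruct Rle_dec; lra.
Qed.

Lemma discrete_ivt (g : nat -> R) (u : R) (n : nat) : g 0%nat <= u -> u <= g n ->
  n = 0%nat \/ exists i, (i < n)%nat /\ g i <= u <= g (S i).
Proof.
  induction n as [|n IH]; intros H0 Hn; [now left|right].
  destruct (Rle_or_lt (g n) u) as [Hl|Hl].
  - exists n. split; [lia|lra].
  - destruct (IH H0 ltac:(lra)) as [->|[i [Hi Hg]]]; [lra|].
    exists i. split; [lia|lra].
Qed.

Lemma zpow_swap {X} (h hi : X -> X) k y : zpow hi h k y = zpow h hi (- k) y.
Proof. destruct k; reflexivity. Qed.

Section IntegerPowers.
Variable X : Type.
Variables h hi : X -> X.
Hypothesis Hhhi : forall x, h (hi x) = x.
Hypothesis Hhih : forall x, hi (h x) = x.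

Notation zp := (zpow h hi).

Lemma zp_nat n y : zp (Z.of_nat n) y = Nat.iter n h y.
Proof. destruct n; [reflexivity|]. simpl. rewrite SuccNat2Pos.id_succ. reflexivity. Qed.

Lemma zp_negnat n y : zp (- Z.of_nat n) y = Nat.iter n hi y.
Proof. destruct n; [reflexivity|]. simpl. rewrite SuccNat2Pos.id_succ. reflexivity. Qed.

Lemma Z_nat_cases (k : Z) : exists n, k = Z.of_nat n \/ k = (- Z.of_nat n)%Z.
Proof.
  destruct k as [|p|p].
  - exists 0%nat; left; reflexivity.
  - exists (Pos.to_nat p); left; rewrite positive_nat_Z; reflexivity.
  - exists (Pos.to_nat p); right; rewrite positive_nat_Z; reflexivity.
Qed.

Lemma zp_succ k y : zp (Z.succ k) y = h (zp k y).
Proof.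
  destruct (Z_nat_cases k) as [n [-> | ->]].
  - rewrite <- Nat2Z.inj_succ, !zp_nat. reflexivity.
  - destruct n as [|m]; [reflexivity|].
    replace (Z.succ (- Z.of_nat (S m))) with (- Z.of_nat m)%Z by lia.
    rewrite !zp_negnat. simpl. rewrite Hhhi. reflexivity.
Qed.

Lemma zp_pred k y : zp (Z.pred k) y = hi (zp k y).
Proof.
  destruct (Z_nat_cases k) as [n [-> | ->]].
  - destruct n as [|m]; [reflexivity|].
    replace (Z.pred (Z.of_nat (S m))) with (Z.of_nat m) by lia.
    rewrite !zp_nat. simpl. rewrite Hhih. reflexivity.
  - replace (Z.pred (- Z.of_nat n)) with (- Z.of_nat (S n))%Z by lia.
    rewrite !zp_negnat. reflexivity.
Qed.

Lemma zp_add a b y : zp a (zp b y) = zp (a + b) y.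
Proof.
  induction a using Z.peano_ind.
  - reflexivity.
  - rewrite zp_succ, IHa, <- zp_succ. f_equal. lia.
  - rewrite zp_pred, IHa, <- zp_pred. f_equal. lia.
Qed.

End IntegerPowers.

Section Hyperbolic.
Variable X : Type.
Variable d : X -> X -> R.
Variable delta : R.
Hypothesis Hm : metric X d.

Notation gp := (gromov_product d).

Lemma dpos x y : 0 <= d x y. Proof. apply (d_nonneg _ _ Hm). Qed.
Lemma dsym x y : d x y = d y x. Proof. apply (d_sym _ _ Hm). Qed.
Lemma dtri x y z : d x z <= d x y + d y z. Proof. apply (d_tri _ _ Hm). Qed.
Lemma dxx x : d x x = 0. Proof. apply (d_sep _ _ Hm); reflexivity. Qed.

Lemma gp_sym o y z : gp o y z = gp o z y.
Proof. unfold gromov_product; rewrite (dsym y z); field. Qed.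

Lemma gp_nonneg o y z : 0 <= gp o y z.
Proof. unfold gromov_product. pose proof (dtri y o z). rewrite (dsym y o) in H. lra. Qed.

Lemma gp_le o y z : gp o y z <= d o y.
Proof. unfold gromov_product. pose proof (dtri o y z). lra. Qed.

Lemma gp_le' o y z : gp o y z <= d o z.
Proof. rewrite gp_sym; apply gp_le. Qed.

Lemma gp_lb o y z : d o y - d y z <= gp o y z.
Proof. unfold gromov_product. pose proof (dtri o z y). rewrite (dsym z y) in H. lra. Qed.

Lemma gp_comp o y z : gp o y z + gp y o z = d o y.
Proof. unfold gromov_product. rewrite (dsym y o). lra. Qed.

Lemma gp_self_l o z : gp o o z = 0.
Proof. unfold gromov_product. rewrite dxx. lra. Qed.

Lemma gp_self_r o z : gp o z z = d o z.
Proof. unfold gromov_product. rewrite dxx. lra. Qed.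

Lemma gp_move o y y' z : Rabs (gp o y z - gp o y' z) <= d y y'.
Proof.
  unfold gromov_product. pose proof (dtri o y y'). pose proof (dtri o y' y).
  pose proof (dtri y y' z). pose proof (dtri y' y z). rewrite (dsym y' y) in *.
  apply Rabs_le; lra.
Qed.

Lemma gp_move_base o o' y z : Rabs (gp o y z - gp o' y z) <= d o o'.
Proof.
  unfold gromov_product. pose proof (dtri o o' y). pose proof (dtri o' o y).
  pose proof (dtri o o' z). pose proof (dtri o' o z). rewrite (dsym o' o) in *.
  apply Rabs_le; lra.
Qed.

Lemma gp_ge_between o a b w : d a w + d w b = d a b -> gp o a b <= d o w.
Proof.
  intro H. unfold gromov_product. pose proof (dtri o w a). pose proof (dtri o w b).
  rewrite (dsym w a) in *. lra.
Qed.

Lemma gp_iso f o y z : is_isometry d f -> gp (f o) (f y) (f z) = gp o y z.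
Proof. intros Hf. unfold gromov_product. rewrite !Hf. reflexivity. Qed.

Lemma same_limit_gp_lb (a b b' : nat -> X) p K r : same_limit d a b ->
  (forall n, d (b n) (b' n) <= r) -> exists N, forall n, (N <= n)%nat -> K < gp p (a n) (b' n).
Proof.
  intros [o Ho] Hb. destruct (Ho (K + d o p + r + 1)) as [N HN]. exists N. intros n Hn.
  specialize (HN n n Hn Hn). specialize (Hb n).
  pose proof (gp_move_base o p (a n) (b n)) as M1.
  pose proof (gp_move p (b n) (b' n) (a n)) as M2.
  rewrite !(gp_sym p _ (a n)) in M2.
  apply Rabs_le_inv in M1. apply Rabs_le_inv in M2. lra.
Qed.

Lemma seg_lip x y c s t : geodesic_segment d x y c ->
  0 <= s <= d x y -> 0 <= t <= d x y -> d (c s) (c t) = Rabs (s - t).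
Proof. intros [_ [_ H]]; auto. Qed.

Lemma seg_dist x y c u : geodesic_segment d x y c -> 0 <= u <= d x y ->
  d x (c u) = u /\ d (c u) y = d x y - u.
Proof.
  intros Hc Hu. pose proof Hc as [H0 [H1 _]]. split.
  - rewrite <- H0 at 1. rewrite (seg_lip x y c) by (auto; lra). rewrite Rabs_le_sub; lra.
  - rewrite <- H1 at 1. pose proof (dpos x y).
    rewrite (seg_lip x y c) by (auto; lra). rewrite Rabs_le_sub; lra.
Qed.

Lemma seg_between x y c u : geodesic_segment d x y c -> 0 <= u <= d x y ->
  d x (c u) + d (c u) y = d x y.
Proof. intros. destruct (seg_dist x y c u); auto; lra. Qed.

Lemma seg_rev x y c : geodesic_segment d x y c ->
  geodesic_segment d y x (fun u => c (d x y - u)).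
Proof.
  intros [H0 [H1 H2]]. unfold geodesic_segment. rewrite (dsym y x). split; [|split].
  - rewrite Rminus_0_r; auto.
  - rewrite Rminus_diag; auto.
  - intros s t Hs Ht. rewrite H2 by lra. rewrite <- Rabs_Ropp. f_equal; ring.
Qed.

Lemma seg_sub x y c a b : geodesic_segment d x y c -> 0 <= a <= b -> b <= d x y ->
  geodesic_segment d (c a) (c b) (fun u => c (a + u)).
Proof.
  intros Hc Hab Hb. pose proof Hc as [_ [_ H2]].
  assert (E : d (c a) (c b) = b - a) by (rewrite H2 by lra; apply Rabs_le_sub; lra).
  unfold geodesic_segment. rewrite E. split; [|split].
  - rewrite Rplus_0_r; auto.
  - f_equal; ring.
  - intros s t Hs Ht. rewrite H2 by lra. f_equal; ring.
Qed.

Lemma seg_iso f x y c : is_isometry d f -> geodesic_segment d x y c ->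
  geodesic_segment d (f x) (f y) (fun u => f (c u)).
Proof.
  intros Hf [H0 [H1 H2]]. unfold geodesic_segment. rewrite Hf. split; [|split].
  - rewrite H0; auto.
  - rewrite H1; auto.
  - intros s t Hs Ht. rewrite Hf in *. apply H2; auto.
Qed.

Lemma line_segment c T : geodesic_line d c -> 0 <= T ->
  geodesic_segment d (c (- T)) (c T) (fun u => c (- T + u)) /\ d (c (- T)) (c T) = 2 * T.
Proof.
  intros Hc HT. assert (E : d (c (- T)) (c T) = 2 * T).
  { rewrite Hc, Rabs_left1 by lra. ring. }
  split; [|exact E]. unfold geodesic_segment. rewrite E. split; [|split].
  - f_equal; ring.
  - f_equal; ring.
  - intros s t _ _. rewrite Hc. f_equal. ring.
Qed.

Hypothesis Hgeo : geodesic_space d.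
Hypothesis Hthin : delta_thin d delta.

Lemma seg_exists x y : exists c, geodesic_segment d x y c.
Proof. apply Hgeo. Qed.

(* Thinness of a degenerate triangle forces [delta >= 0] (X is inhabited). *)
Lemma delta_nonneg (x : X) : 0 <= delta.
Proof.
  destruct (seg_exists x x) as [c Hc].
  pose proof (Hthin x x x c c Hc Hc 0) as H.
  destruct Hc as [H0 _]. rewrite H0, dxx in H. apply H.
  pose proof (gp_nonneg x x x). lra.
Qed.

Lemma side_cover a b e Sab Sae Sbe u :
  geodesic_segment d a b Sab -> geodesic_segment d a e Sae -> geodesic_segment d b e Sbe ->
  0 <= u <= d a b ->
  (exists v, 0 <= v <= d a e /\ d (Sab u) (Sae v) <= delta) \/
  (exists v, 0 <= v <= d b e /\ d (Sab u) (Sbe v) <= delta).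
Proof.
  intros Hab Hae Hbe Hu.
  pose proof (gp_comp a b e) as Hc.
  destruct (Rle_or_lt u (gp a b e)) as [Hl|Hl].
  - left. exists u. split.
    + pose proof (gp_le' a b e); lra.
    + apply (Hthin a b e Sab Sae Hab Hae u). lra.
  - right. exists (d a b - u). split.
    + pose proof (gp_le' b a e); lra.
    + pose proof (Hthin b a e _ Sbe (seg_rev a b Sab Hab) Hbe (d a b - u)) as H.
      cbv beta in H. replace (d a b - (d a b - u)) with u in H by ring. apply H. lra.
Qed.

Lemma near_side_point w x y Sxy :
  geodesic_segment d x y Sxy -> d w (Sxy (gp x w y)) <= gp w x y + delta.
Proof.
  intros Hxy. destruct (seg_exists x w) as [Sxw Hxw].
  pose proof (gp_nonneg x w y). pose proof (gp_le x w y).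
  pose proof (Hthin x w y Sxw Sxy Hxw Hxy (gp x w y) ltac:(lra)) as Hthin_w.
  destruct (seg_dist x w Sxw (gp x w y) Hxw) as [_ E]; [lra|].
  pose proof (gp_comp x w y).
  pose proof (dtri w (Sxw (gp x w y)) (Sxy (gp x w y))).
  pose proof (dsym w (Sxw (gp x w y))). lra.
Qed.

Lemma four_point w x y z : gp w x y >= Rmin (gp w x z) (gp w y z) - 2 * delta.
Proof.
  destruct (seg_exists x y) as [Sxy Hxy]. destruct (seg_exists x z) as [Sxz Hxz].
  destruct (seg_exists y z) as [Syz Hyz].
  pose proof (near_side_point w x y Sxy Hxy) as H1.
  assert (Hu : 0 <= gp x w y <= d x y)
    by (pose proof (gp_nonneg x w y); pose proof (gp_le' x w y); lra).
  pose proof (Rmin_l (gp w x z) (gp w y z)). pose proof (Rmin_r (gp w x z) (gp w y z)).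
  destruct (side_cover x y z Sxy Sxz Syz _ Hxy Hxz Hyz Hu) as [[v [Hv Hd]]|[v [Hv Hd]]].
  - pose proof (gp_ge_between w x z _ (seg_between x z Sxz v Hxz Hv)).
    pose proof (dtri w (Sxy (gp x w y)) (Sxz v)). lra.
  - pose proof (gp_ge_between w y z _ (seg_between y z Syz v Hyz Hv)).
    pose proof (dtri w (Sxy (gp x w y)) (Syz v)). lra.
Qed.

Section Isometry.
Variables h hi : X -> X.
Hypothesis Hhhi : forall x, h (hi x) = x.
Hypothesis Hhih : forall x, hi (h x) = x.
Hypothesis Hiso : is_isometry d h.

Notation zp := (zpow h hi).
Let zadd := zp_add X h hi Hhhi Hhih.

Lemma inv_iso : is_isometry d hi.
Proof. intros u v. rewrite <- (Hiso (hi u) (hi v)), !Hhhi. reflexivity. Qed.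

Lemma zp_iso k : is_isometry d (zp k).
Proof.
  induction k using Z.peano_ind; intros u v.
  - reflexivity.
  - rewrite !(zp_succ X h hi Hhhi), Hiso. apply IHk.
  - rewrite !(zp_pred X h hi Hhih), inv_iso. apply IHk.
Qed.

Lemma zp_disp k y : d (zp k y) (h (zp k y)) = d y (h y).
Proof.
  change (h (zp k y)) with (zp 1 (zp k y)).
  rewrite zadd, Z.add_comm, <- zadd. apply zp_iso.
Qed.

Lemma disp_inv y : d y (hi y) = d y (h y).
Proof. rewrite <- (Hiso y (hi y)), Hhhi. apply dsym. Qed.

Lemma zp_back k y z : d (zp (- k) y) z = d y (zp k z).
Proof.
  rewrite <- (zp_iso k (zp (- k) y) z), zadd. replace (k + - k)%Z with 0%Z by lia. reflexivity.
Qed.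

Lemma iter_iso n u v : d (Nat.iter n h u) (Nat.iter n h v) = d u v.
Proof. rewrite <- !(zp_nat X h hi). apply zp_iso. Qed.

Lemma iter_inv_iso n u v : d (Nat.iter n hi u) (Nat.iter n hi v) = d u v.
Proof. rewrite <- !(zp_negnat X h hi). apply zp_iso. Qed.

End Isometry.

(* In the next two sections [x] is
   displaced by [s = d(x, h x)], which is within [eps] of the infimum of all
   displacements, and [s > 3 delta + eps]; the orbit [x_k = h^k x] then behaves like a
   quasi-geodesic with explicit constants.  The one-step estimate is proved in its own
   section so that it can also be applied to [h^-1]. *)

Section OrbitStep.
Variables h hi : X -> X.
Hypothesis Hhhi : forall x, h (hi x) = x.
Hypothesis Hhih : forall x, hi (h x) = x.
Hypothesis Hiso : is_isometry d h.
Variable x : X.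
Variable eps : R.
Hypothesis Hnm : forall z, d x (h x) <= d z (h z) + eps.
Hypothesis Hs : 3 * delta + eps < d x (h x).

Notation zp := (zpow h hi).
Notation orb k := (zpow h hi k x).
Notation s := (d x (h x)).
Let zadd := zp_add X h hi Hhhi Hhih.
Let ziso := zp_iso h hi Hhhi Hhih Hiso.

Lemma orb_dist k : d (orb k) (orb (k + 1)) = s.
Proof.
  replace (orb (k + 1)) with (zp k (h x)); [apply ziso|].
  change (h x) with (zp 1 x). rewrite zadd. reflexivity.
Qed.

Lemma translate_seg sig k : geodesic_segment d x (h x) sig ->
  geodesic_segment d (orb k) (orb (k + 1)) (fun u => zp k (sig u)).
Proof.
  intro Hsig. pose proof (seg_iso (zp k) _ _ sig (ziso k) Hsig) as H.
  replace (orb (k + 1)) with (zp k (h x)); [exact H|].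
  change (h x) with (zp 1 x). rewrite zadd. reflexivity.
Qed.

(* Corner cutting: a path from the point at distance [t] before [x_{k+1}] to the
   point at distance [t] after it, avoiding the corner, cannot save much more than
   [2 t], since otherwise that point would be displaced by less than [s - eps]. *)
Lemma corner_cut sig k t p : geodesic_segment d x (h x) sig -> 0 <= t <= s / 2 ->
  2 * t - eps <= d p (zp k (sig (s - t))) + d p (zp (k + 1) (sig t)).
Proof.
  intros Hsig Ht.
  set (y := zp k (sig (s - t))).
  assert (Hy : h y = zp (k + 1) (sig (s - t))) by (symmetry; apply (zp_succ X h hi Hhhi)).
  assert (Hts : d (zp (k + 1) (sig t)) (zp (k + 1) (sig (s - t))) = s - 2 * t).
  { rewrite ziso, (seg_lip _ _ _ t (s - t) Hsig) by lra. rewrite Rabs_le_sub; lra. }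
  pose proof (Hnm y) as Hdisp. rewrite Hy in Hdisp.
  pose proof (dtri y p (zp (k + 1) (sig (s - t)))). rewrite (dsym y p) in *.
  pose proof (dtri p (zp (k + 1) (sig t)) (zp (k + 1) (sig (s - t)))). lra.
Qed.

Lemma orbit_step_gp (n : nat) :
  gp (orb (Z.of_nat n)) (orb 0) (orb (Z.of_nat n + 1)) <= delta + eps / 2.
Proof.
  destruct (seg_exists x (h x)) as [sig Hsig].
  pose proof (delta_nonneg x) as Hd0. pose proof (Hnm x) as Heps.
  induction n as [|n IH].
  - rewrite gp_self_l. lra.
  - rewrite Nat2Z.inj_succ. unfold Z.succ.
    set (n' := Z.of_nat n) in *. set (m := (n' + 1)%Z) in *.
    destruct (seg_exists (orb m) (orb 0)) as [T HT].
    assert (E1 : gp (orb m) (orb 0) (orb n') = s - gp (orb n') (orb 0) (orb m)).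
    { pose proof (gp_comp (orb n') (orb m) (orb 0)) as E. rewrite orb_dist in E.
      rewrite (gp_sym (orb n') (orb m)) in E. rewrite (gp_sym (orb m)). lra. }
    pose proof (gp_nonneg (orb m) (orb 0) (orb (m + 1))) as G.
    pose proof (Rmin3_spec (gp (orb m) (orb 0) (orb (m + 1)))
      (s - gp (orb n') (orb 0) (orb m)) (s / 2)) as Ht.
    set (t := Rmin _ (Rmin _ (s / 2))) in Ht.
    assert (Ht0 : 0 <= t) by lra.
    (* [T t] is [delta]-close to the sides [x_m x_{m+1}] and [x_m x_{n'}]. *)
    pose proof (Hthin _ _ _ T _ HT (translate_seg sig m Hsig) t ltac:(lra)) as H1.
    pose proof (seg_rev _ _ _ (translate_seg sig n' Hsig)) as Rn.
    rewrite orb_dist in Rn.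
    pose proof (Hthin _ _ _ T _ HT Rn t ltac:(lra)) as H2. cbv beta in H1, H2.
    pose proof (corner_cut sig n' t (T t) Hsig ltac:(lra)) as Hcut.
    change (n' + 1)%Z with m in Hcut.
    destruct Ht as (_ & _ & _ & [Ht|[Ht|Ht]]); lra.
Qed.

End OrbitStep.

Section Orbit.
Variables h hi : X -> X.
Hypothesis Hhhi : forall x, h (hi x) = x.
Hypothesis Hhih : forall x, hi (h x) = x.
Hypothesis Hiso : is_isometry d h.
Variable x : X.
Variable eps : R.
Hypothesis Hnm : forall z, d x (h x) <= d z (h z) + eps.
Hypothesis Hs : 3 * delta + eps < d x (h x).

Notation zp := (zpow h hi).
Notation orb k := (zpow h hi k x).
Notation s := (d x (h x)).
Let zadd := zp_add X h hi Hhhi Hhih.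
Let ziso := zp_iso h hi Hhhi Hhih Hiso.
Let orbd := orb_dist h hi Hhhi Hhih Hiso x.

Lemma delta_nn : 0 <= delta. Proof. apply (delta_nonneg x). Qed.

(* The slack [eps] is nonnegative, as [x] itself is one of the competitors. *)
Lemma eps_nn : 0 <= eps. Proof. pose proof (Hnm x). lra. Qed.

Lemma orbit_step_gp_inv (n : nat) :
  gp (orb (- Z.of_nat n)) (orb 0) (orb (- (Z.of_nat n + 1))) <= delta + eps / 2.
Proof.
  assert (Hnm' : forall z, d x (hi x) <= d z (hi z) + eps).
  { intro z. rewrite !(disp_inv h hi Hhhi Hiso). apply Hnm. }
  assert (Hs' : 3 * delta + eps < d x (hi x)) by (rewrite (disp_inv h hi Hhhi Hiso); exact Hs).
  pose proof (orbit_step_gp hi h Hhih Hhhi (inv_iso h hi Hhhi Hiso) x eps Hnm' Hs' n) as H.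
  rewrite !(zpow_swap h hi) in H. exact H.
Qed.

Lemma gp_shift k a b c :
  gp (orb a) (orb b) (orb c) = gp (orb (k + a)) (orb (k + b)) (orb (k + c)).
Proof. rewrite <- !zadd. symmetry. apply gp_iso. apply ziso. Qed.

Lemma orbit_gp_right (b : Z) : (1 <= b)%Z -> gp (orb 1) (orb 0) (orb b) <= delta + eps / 2.
Proof.
  intro Hb. pose proof (orbit_step_gp_inv (Z.to_nat (b - 1))) as H.
  rewrite Z2Nat.id, (gp_shift b) in H by lia.
  replace (b + - (b - 1))%Z with 1%Z in H by lia.
  replace (b + 0)%Z with b in H by lia.
  replace (b + - (b - 1 + 1))%Z with 0%Z in H by lia.
  rewrite gp_sym. exact H.
Qed.

Lemma orbit_gp_left (a : Z) : (1 <= a)%Z -> gp (orb (-1)) (orb 0) (orb (- a)) <= delta + eps / 2.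
Proof.
  intro Ha. pose proof (orbit_step_gp h hi Hhhi Hhih Hiso x eps Hnm Hs (Z.to_nat (a - 1))) as H.
  rewrite Z2Nat.id, (gp_shift (- a)) in H by lia.
  replace (- a + (a - 1))%Z with (-1)%Z in H by lia.
  replace (- a + 0)%Z with (- a)%Z in H by lia.
  replace (- a + (a - 1 + 1))%Z with 0%Z in H by lia.
  rewrite gp_sym. exact H.
Qed.

Lemma orbit_gp_center (a b : Z) : (1 <= a)%Z -> (1 <= b)%Z ->
  gp x (orb (- a)) (orb b) <= 3 * delta / 2 + eps / 2.
Proof.
  intros Ha Hb. pose proof delta_nn as Hd0. pose proof eps_nn as He0.
  destruct (seg_exists x (h x)) as [sig Hsig].
  destruct (seg_exists x (orb b)) as [T1 HT1].
  destruct (seg_exists x (orb (- a))) as [T2 HT2].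
  assert (P1 : s - delta - eps / 2 <= gp x (orb b) (h x)).
  { pose proof (gp_comp (h x) x (orb b)) as E. rewrite dsym in E.
    pose proof (orbit_gp_right b Hb). rewrite gp_sym. simpl in *. lra. }
  assert (P2 : s - delta - eps / 2 <= gp x (orb (- a)) (orb (-1))).
  { pose proof (gp_comp (orb (-1)) x (orb (- a))) as E.
    assert (D : d (orb (-1)) x = s) by exact (orbd (-1)). rewrite D in E.
    pose proof (orbit_gp_left a Ha). rewrite gp_sym. simpl in *. lra. }
  pose proof (gp_nonneg x (orb (- a)) (orb b)) as G.
  pose proof (Rmin3_spec (gp x (orb (- a)) (orb b)) (s - delta - eps / 2) (s / 2)) as Ht.
  set (t := Rmin _ (Rmin _ (s / 2))) in Ht.
  (* [T2 t] is close to [T1 t], which is close to [sig t]; and [T2 t] is close to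
     the point at distance [t] before [x] on [h^-1 [x, h x]]. *)
  pose proof (Hthin _ _ _ T2 T1 HT2 HT1 t ltac:(lra)) as H1.
  pose proof (Hthin _ _ _ T1 sig HT1 Hsig t ltac:(lra)) as H2.
  pose proof (seg_rev _ _ _ (translate_seg h hi Hhhi Hhih Hiso x sig (-1) Hsig)) as Rm.
  rewrite (orbd (-1)) in Rm.
  pose proof (Hthin _ _ _ T2 _ HT2 Rm t ltac:(lra)) as H3. cbv beta in H3.
  pose proof (corner_cut h hi Hhhi Hhih Hiso x eps Hnm sig (-1) t (T2 t) Hsig ltac:(lra)) as Hcut.
  change (zp (-1 + 1) (sig t)) with (sig t) in Hcut.
  pose proof (dtri (T2 t) (T1 t) (sig t)).
  destruct Ht as (_ & _ & _ & [Ht|[Ht|Ht]]); lra.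
Qed.

Lemma orbit_growth (n : nat) : INR n * (s - 2 * delta - eps) <= d x (orb (Z.of_nat n)).
Proof.
  induction n as [|n IH].
  - simpl. rewrite Rmult_0_l. apply dpos.
  - pose proof (orbit_step_gp h hi Hhhi Hhih Hiso x eps Hnm Hs n) as H.
    unfold gromov_product in H. pose proof (orbd (Z.of_nat n)) as E.
    rewrite Nat2Z.inj_succ. unfold Z.succ. rewrite S_INR.
    rewrite (dsym (orb (Z.of_nat n)) (orb 0)) in H. simpl in *. lra.
Qed.

Lemma orbit_dist_opp (k : Z) : d x (orb (- k)) = d x (orb k).
Proof.
  rewrite dsym, (zp_back h hi Hhhi Hhih Hiso). reflexivity.
Qed.

Lemma orbit_unbounded (r : R) : exists M : Z, forall j, (M <= j)%Z -> r <= d x (orb j).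
Proof.
  pose proof delta_nn. set (c := s - 2 * delta - eps).
  assert (Hc : 0 < c) by (unfold c; lra).
  destruct (nat_above (r / c)) as [N HN].
  exists (Z.of_nat N). intros j Hj.
  pose proof (orbit_growth (Z.to_nat j)) as G. rewrite Z2Nat.id in G by lia.
  specialize (HN (Z.to_nat j) ltac:(lia)).
  assert (r / c * c = r) by (field; lra).
  assert (r / c * c <= INR (Z.to_nat j) * c) by (apply Rmult_le_compat_r; lra).
  fold c in G. lra.
Qed.

Lemma orbit_near_projection (a k b : Z) S : (a <= k <= b)%Z ->
  geodesic_segment d (orb a) (orb b) S ->
  d (orb k) (S (gp (orb a) (orb k) (orb b))) <= 5 * delta / 2 + eps / 2.
Proof.
  intros Hk HS. pose proof delta_nn as Hd0. pose proof eps_nn as He0.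
  destruct (Z.eq_dec k a) as [->|Hka].
  - rewrite gp_self_l. destruct HS as [-> _]. rewrite dxx. lra.
  - destruct (Z.eq_dec k b) as [->|Hkb].
    + rewrite gp_self_r. destruct HS as [_ [-> _]]. rewrite dxx. lra.
    + pose proof (near_side_point (orb k) _ _ S HS) as H.
      rewrite (gp_shift (- k) k a b) in H.
      replace (- k + k)%Z with 0%Z in H by lia.
      replace (- k + a)%Z with (- (k - a))%Z in H by lia.
      replace (- k + b)%Z with (b - k)%Z in H by lia.
      pose proof (orbit_gp_center (k - a) (b - k) ltac:(lia) ltac:(lia)). simpl in *. lra.
Qed.

(* [y] lies within [r] of the [h]-invariant broken line [U_k h^k [x, h x]]. *)
Definition near_orbit_path (sig : R -> X) (y : X) (r : R) : Prop :=
  exists k v, 0 <= v <= s /\ d y (zp k (sig v)) <= r.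

Lemma near_orbit_path_orb sig k y r : geodesic_segment d x (h x) sig ->
  d y (orb k) <= r -> near_orbit_path sig y r.
Proof.
  intros Hsig Hy. exists k, 0. split; [pose proof (dpos x (h x)); lra|].
  destruct Hsig as [-> _]. exact Hy.
Qed.

Lemma near_orbit_path_move sig y y' r e :
  near_orbit_path sig y r -> d y' y <= e -> near_orbit_path sig y' (r + e).
Proof.
  intros [k [v [Hv Hd]]] Hy. exists k, v. split; [exact Hv|].
  pose proof (dtri y' y (zp k (sig v))). lra.
Qed.

(* A point of a geodesic [x_a x_b] lying between the projections of two consecutive
   orbit points [x_k], [x_{k+1}] is close to the broken line: use the triangles
   [(q_k, q_{k+1}, x_{k+1})] and [(q_k, x_k, x_{k+1})], [q_k] being the projection. *)
Lemma near_orbit_path_between sig (a k b : Z) S u : geodesic_segment d x (h x) sig ->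
  (a <= k)%Z -> (k + 1 <= b)%Z -> geodesic_segment d (orb a) (orb b) S ->
  gp (orb a) (orb k) (orb b) <= u <= gp (orb a) (orb (k + 1)) (orb b) ->
  near_orbit_path sig (S u) (9 * delta / 2 + eps / 2).
Proof.
  intros Hsig Hak Hkb HS Hu. pose proof delta_nn as Hd0. pose proof eps_nn as He0.
  set (t1 := gp (orb a) (orb k) (orb b)) in *.
  set (t2 := gp (orb a) (orb (k + 1)) (orb b)) in *.
  pose proof (orbit_near_projection a k b S ltac:(lia) HS) as N1. fold t1 in N1.
  pose proof (orbit_near_projection a (k + 1) b S ltac:(lia) HS) as N2. fold t2 in N2.
  pose proof (gp_nonneg (orb a) (orb k) (orb b)) as T1a. fold t1 in T1a.
  pose proof (gp_le' (orb a) (orb (k + 1)) (orb b)) as T2b. fold t2 in T2b.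
  pose proof (seg_sub _ _ _ t1 t2 HS ltac:(lra) ltac:(lra)) as Q.
  assert (LQ : d (S t1) (S t2) = t2 - t1).
  { rewrite (seg_lip _ _ _ t1 t2 HS) by lra. apply Rabs_le_sub; lra. }
  assert (Hz : S u = S (t1 + (u - t1))) by (f_equal; ring).
  destruct (seg_exists (S t1) (orb (k + 1))) as [Sae Hae].
  destruct (seg_exists (S t2) (orb (k + 1))) as [Sbe Hbe].
  assert (Hu' : 0 <= u - t1 <= d (S t1) (S t2)) by lra.
  destruct (side_cover _ _ _ _ Sae Sbe _ Q Hae Hbe Hu') as [[v [Hv Hd]]|[v [Hv Hd]]];
    rewrite <- Hz in Hd.
  - destruct (seg_exists (S t1) (orb k)) as [Sk HSk].
    pose proof (seg_rev _ _ _ (translate_seg h hi Hhhi Hhih Hiso x sig k Hsig)) as Rk.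
    rewrite (orbd k) in Rk.
    destruct (side_cover _ _ _ _ Sk _ v Hae HSk Rk Hv) as [[w [Hw Hd2]]|[w [Hw Hd2]]].
    +
      apply (near_orbit_path_orb sig k); [exact Hsig|].
      destruct (seg_dist _ _ _ w HSk Hw) as [_ E].
      pose proof (dtri (S u) (Sae v) (Sk w)). pose proof (dtri (S u) (Sk w) (orb k)).
      rewrite (dsym (orb k)) in N1. lra.
    +
      pose proof (orbd k) as Ek. rewrite dsym in Ek.
      exists k, (s - w). split; [lra|].
      pose proof (dtri (S u) (Sae v) (zp k (sig (s - w)))). lra.
  -
    apply (near_orbit_path_orb sig (k + 1)); [exact Hsig|].
    destruct (seg_dist _ _ _ v Hbe Hv) as [_ E].
    pose proof (dtri (S u) (Sbe v) (orb (k + 1))).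
    rewrite (dsym (orb (k + 1))) in N2. pose proof (dpos (S t2) (Sbe v)). lra.
Qed.

Lemma segment_near_orbit_path sig (a b : Z) S u : geodesic_segment d x (h x) sig ->
  (a <= b)%Z -> geodesic_segment d (orb a) (orb b) S -> 0 <= u <= d (orb a) (orb b) ->
  near_orbit_path sig (S u) (9 * delta / 2 + eps / 2).
Proof.
  intros Hsig Hab HS Hu. pose proof delta_nn. pose proof eps_nn.
  set (tau := fun i : nat => gp (orb a) (orb (a + Z.of_nat i)) (orb b)).
  assert (G0 : tau 0%nat <= u).
  { unfold tau. simpl. rewrite Z.add_0_r, gp_self_l. lra. }
  assert (Gn : u <= tau (Z.to_nat (b - a))).
  { unfold tau. rewrite Z2Nat.id by lia. replace (a + (b - a))%Z with b by lia.
    rewrite gp_self_r. lra. }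
  destruct (discrete_ivt tau u _ G0 Gn) as [E|[i [Hi Hg]]].
  -
    assert (a = b) by lia. subst b. rewrite dxx in Hu.
    replace u with 0 by lra. destruct HS as [-> _].
    apply (near_orbit_path_orb sig a); [exact Hsig|]. rewrite dxx. lra.
  - unfold tau in Hg. rewrite Nat2Z.inj_succ, <- Z.add_1_r, Z.add_assoc in Hg.
    apply (near_orbit_path_between sig a (a + Z.of_nat i) b); auto; lia.
Qed.

Lemma near_orbit_path_far_ends sig (N : Z) A B L u : geodesic_segment d x (h x) sig ->
  (1 <= N)%Z -> geodesic_segment d A B L -> 0 <= u <= d A B ->
  2 * delta < gp (L u) A (orb (- N)) -> 2 * delta < gp (L u) B (orb N) ->
  near_orbit_path sig (L u) (13 * delta / 2 + eps / 2).
Proof.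
  intros Hsig HN HL Hu G1 G2. pose proof delta_nn as Hd0.
  destruct (seg_exists A (orb N)) as [SAN HAN].
  destruct (seg_exists B (orb N)) as [SBN HBN].
  destruct (side_cover _ _ _ _ SAN SBN _ HL HAN HBN Hu) as [[v [Hv Hd]]|[v [Hv Hd]]].
  2:{ exfalso. pose proof (gp_ge_between (L u) _ _ _ (seg_between _ _ _ v HBN Hv)). lra. }
  destruct (seg_exists A (orb (- N))) as [SAm HAm].
  destruct (seg_exists (orb (- N)) (orb N)) as [S HS].
  destruct (side_cover _ _ _ _ SAm _ v HAN HAm (seg_rev _ _ _ HS) Hv)
    as [[w [Hw Hd2]]|[w [Hw Hd2]]].
  - exfalso. pose proof (gp_ge_between (L u) _ _ _ (seg_between _ _ _ w HAm Hw)).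
    pose proof (dtri (L u) (SAN v) (SAm w)). lra.
  - rewrite dsym in Hw.
    pose proof (segment_near_orbit_path sig (- N) N S (d (orb (- N)) (orb N) - w)
      Hsig ltac:(lia) HS ltac:(lra)) as P.
    pose proof (dtri (L u) (SAN v) (S (d (orb (- N)) (orb N) - w))) as Tr.
    replace (13 * delta / 2 + eps / 2) with (9 * delta / 2 + eps / 2 + 2 * delta) by field.
    apply (near_orbit_path_move _ _ _ _ _ P). lra.
Qed.

(* On a geodesic [x_{-j} x_j] the projection of [x = x_0] sits at parameter
   [tau_j = (x_0 | x_j)_{x_{-j}}], and both [tau_j] and the remaining length grow
   like [d(x, x_j)]. *)
Lemma center_param_lb (j : Z) : (1 <= j)%Z ->
  d x (orb j) - 3 * delta / 2 - eps / 2 <= gp (orb (- j)) x (orb j).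
Proof.
  intro Hj. pose proof (gp_comp (orb (- j)) x (orb j)) as E.
  pose proof (orbit_gp_center j j Hj Hj). rewrite dsym, orbit_dist_opp in E. lra.
Qed.

Lemma center_param_lb' (j : Z) : (1 <= j)%Z ->
  d x (orb j) - 3 * delta / 2 - eps / 2 <= d (orb (- j)) (orb j) - gp (orb (- j)) x (orb j).
Proof.
  intro Hj. pose proof (gp_comp (orb (- j)) (orb j) x) as E1.
  pose proof (gp_comp (orb j) x (orb (- j))) as E2.
  pose proof (orbit_gp_center j j Hj Hj).
  rewrite (gp_sym (orb (- j)) (orb j) x), (gp_sym (orb j) (orb (- j)) x) in E1.
  rewrite (gp_sym x (orb j) (orb (- j))), (dsym (orb j) x) in E2. lra.
Qed.

Lemma beyond_center_gp_lb (j m : Z) S n : (1 <= m)%Z -> (m < j)%Z ->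
  geodesic_segment d (orb (- j)) (orb j) S -> 0 <= n ->
  gp (orb (- j)) x (orb j) + n <= d (orb (- j)) (orb j) ->
  Rmin (n - 5 * delta / 2 - eps / 2) (d x (orb m) - 3 * delta / 2 - eps / 2) - 2 * delta
    <= gp x (S (gp (orb (- j)) x (orb j) + n)) (orb m).
Proof.
  intros Hm1 Hmj HS Hn Hr. pose proof delta_nn.
  set (tau := gp (orb (- j)) x (orb j)) in *.
  pose proof (gp_nonneg (orb (- j)) x (orb j)) as T0. fold tau in T0.
  pose proof (orbit_near_projection (- j) 0 j S ltac:(lia) HS) as Hp.
  change (orb 0) with x in Hp. fold tau in Hp.
  destruct (seg_dist _ _ _ (tau + n) HS ltac:(lra)) as [E1 E2].
  destruct (seg_dist _ _ _ tau HS ltac:(lra)) as [E3 E4].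
  assert (Hpq : d (S tau) (S (tau + n)) = n).
  { rewrite (seg_lip _ _ _ tau (tau + n) HS) by lra. rewrite Rabs_le_sub; lra. }
  assert (Q1 : n - 5 * delta / 2 - eps / 2 <= gp x (S (tau + n)) (orb j)).
  { unfold gromov_product.
    pose proof (dtri x (S tau) (S (tau + n))). pose proof (dtri (S tau) x (S (tau + n))).
    pose proof (dtri (S tau) x (orb j)). rewrite (dsym (S tau) x) in *. lra. }
  assert (Q2 : d x (orb m) - 3 * delta / 2 - eps / 2 <= gp x (orb m) (orb j)).
  { assert (Sh : gp (orb m) x (orb j) = gp x (orb (- m)) (orb (- m + j))).
    { change (gp (orb m) (orb 0) (orb j) = gp (orb 0) (orb (- m)) (orb (- m + j))).
      rewrite (gp_shift (- m) m 0 j).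
      replace (- m + m)%Z with 0%Z by lia. replace (- m + 0)%Z with (- m)%Z by lia.
      reflexivity. }
    pose proof (gp_comp x (orb m) (orb j)) as E.
    pose proof (orbit_gp_center m (- m + j) ltac:(lia) ltac:(lia)). lra. }
  pose proof (four_point x (S (tau + n)) (orb m) (orb j)) as F.
  unfold Rmin in *. repeat destruct Rle_dec; lra.
Qed.

(* [c] restricted to [t >= 0] is a limit of the parts beyond the projection of [x]
   of arbitrarily long geodesics [x_{-j} x_j]. *)
Definition approximated_ray (c : R -> X) : Prop :=
  forall t e M, 0 <= t -> 0 < e -> exists j S, (M <= j)%Z /\
    geodesic_segment d (orb (- j)) (orb j) S /\
    d (S (gp (orb (- j)) x (orb j) + t)) (c t) < e.

Lemma approximated_ray_gp_lb c : approximated_ray c -> forall t m, 0 <= t -> (1 <= m)%Z ->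
  Rmin (t - 5 * delta / 2 - eps / 2) (d x (orb m) - 3 * delta / 2 - eps / 2) - 2 * delta
    <= gp x (c t) (orb m).
Proof.
  intros Hc t m Ht Hm1. apply le_by_eps. intros e He.
  destruct (orbit_unbounded (t + 3 * delta / 2 + eps / 2)) as [M HM].
  destruct (Hc t e (Z.max M (m + 1)) Ht He) as [j [S [Hj [HS Hd]]]].
  specialize (HM j ltac:(lia)).
  pose proof (center_param_lb' j ltac:(lia)) as HD.
  pose proof (beyond_center_gp_lb j m S t Hm1 ltac:(lia) HS Ht ltac:(lra)) as G.
  pose proof (gp_move x (c t) (S (gp (orb (- j)) x (orb j) + t)) (orb m)) as Mv.
  rewrite dsym in Mv. apply Rabs_le_inv in Mv. lra.
Qed.

Lemma approximated_ray_limit c : d x (c 0) <= 5 * delta / 2 + eps / 2 ->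
  approximated_ray c -> same_limit d (fun n => c (INR n)) (fun n => Nat.iter n h (c 0)).
Proof.
  intros H0 Hc. pose proof delta_nn. pose proof eps_nn. exists x. intro K.
  set (K' := K + 7 * delta + 3 * eps / 2).
  destruct (nat_above K') as [N1 HN1].
  destruct (orbit_unbounded K') as [M HM].
  exists (Nat.max 1 (Nat.max N1 (Z.to_nat M))). intros n m Hn Hmn.
  pose proof (approximated_ray_gp_lb c Hc (INR n) (Z.of_nat m) (pos_INR n) ltac:(lia)) as Hb.
  specialize (HM (Z.of_nat m) ltac:(lia)). specialize (HN1 n ltac:(lia)).
  rewrite <- (zp_nat X h hi m).
  pose proof (gp_move x (zp (Z.of_nat m) (c 0)) (orb (Z.of_nat m)) (c (INR n))) as Mv.
  rewrite ziso in Mv. apply Rabs_le_inv in Mv.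
  rewrite (gp_sym x (c (INR n)) (orb _)) in Hb. rewrite gp_sym. rewrite dsym in H0.
  unfold K' in *. unfold Rmin in Hb. destruct Rle_dec; lra.
Qed.

End Orbit.

Section Limits.
Hypothesis Hprop : proper_space d.

Definition conv (a : nat -> X) (y : X) : Prop :=
  forall e, 0 < e -> exists N, forall n, (N <= n)%nat -> d (a n) y < e.

Lemma Un_cv_conv a y : Un_cv (fun n => d (a n) y) 0 -> conv a y.
Proof.
  intros H e He. destruct (H e He) as [N HN]. exists N. intros n Hn.
  specialize (HN n Hn). unfold Rdist in HN. rewrite Rminus_0_r in HN.
  rewrite Rabs_pos_eq in HN by apply dpos. exact HN.
Qed.

Lemma strict_mono_ge (phi : nat -> nat) : (forall n, (phi n < phi (S n))%nat) ->
  forall n, (n <= phi n)%nat.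
Proof. intros H n. induction n; [lia|]. specialize (H n). lia. Qed.

Lemma strict_mono_lt (phi : nat -> nat) : (forall n, (phi n < phi (S n))%nat) ->
  forall a b, (a < b)%nat -> (phi a < phi b)%nat.
Proof.
  intros H a b Hab. induction b; [lia|].
  destruct (Nat.eq_dec a b) as [->|Hne]; [apply H|].
  specialize (IHb ltac:(lia)). specialize (H b). lia.
Qed.

Lemma cauchy_conv (a : nat -> X) :
  (forall e, 0 < e -> exists N, forall n m, (N <= n)%nat -> (N <= m)%nat -> d (a n) (a m) < e) ->
  exists y, conv a y.
Proof.
  intros Hc. destruct (Hc 1 Rlt_0_1) as [N1 HN1].
  destruct (Hprop (fun n => a (n + N1)%nat) (a N1) 1) as [phi [y [Hphi Hcv]]].
  { intro n. left. apply HN1; lia. }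
  apply Un_cv_conv in Hcv.
  exists y. intros e He.
  destruct (Hc (e/2) ltac:(lra)) as [N2 HN2].
  destruct (Hcv (e/2) ltac:(lra)) as [N3 HN3].
  exists N2. intros n Hn.
  set (n0 := Nat.max N2 N3).
  pose proof (strict_mono_ge phi Hphi n0).
  specialize (HN3 n0 ltac:(lia)).
  specialize (HN2 n (phi n0 + N1)%nat Hn ltac:(lia)).
  pose proof (dtri (a n) (a (phi n0 + N1)%nat) y). lra.
Qed.

(* Cantor's diagonal extraction: countably many bounded sequences have a common
   subsequence along which all of them converge. *)
Lemma diagonal_extraction (F : nat -> nat -> X) :
  (forall k, exists o B, forall n, d o (F k n) <= B) ->
  exists phi : nat -> nat, (forall n, (phi n < phi (S n))%nat) /\
    forall k, exists y, conv (fun n => F k (phi n)) y.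
Proof.
  intros Hb.
  assert (Hex : forall k (psi : nat -> nat), exists theta : nat -> nat,
    (forall n, (theta n < theta (S n))%nat) /\ exists y, conv (fun n => F k (psi (theta n))) y).
  { intros k psi. destruct (Hb k) as [o [B HB]].
    destruct (Hprop (fun n => F k (psi n)) o B (fun n => HB (psi n))) as [th [y [H1 H2]]].
    exists th. split; auto. exists y. apply Un_cv_conv. exact H2. }
  destruct (choice (fun (kpsi : nat * (nat -> nat)) (theta : nat -> nat) =>
     (forall n, (theta n < theta (S n))%nat) /\
     exists y, conv (fun n => F (fst kpsi) (snd kpsi (theta n))) y)
     (fun kpsi => Hex (fst kpsi) (snd kpsi))) as [pick Hpick].
  (* [sub k] extracts successively along the sequences [F 0], ..., [F (k - 1)]. *)
  set (sub := fix sub (k : nat) : nat -> nat :=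
     match k with O => fun n => n | S k' => fun n => sub k' (pick (k', sub k') n) end).
  assert (Esub : forall k n, sub (S k) n = sub k (pick (k, sub k) n)) by reflexivity.
  assert (Sinc : forall k n, (sub k n < sub k (S n))%nat).
  { induction k; intro n; [simpl; lia|].
    rewrite !Esub. apply strict_mono_lt; auto. apply (Hpick (k, sub k)). }
  assert (Hsub : forall k n, (k <= n)%nat -> forall i, exists m, (i <= m)%nat /\
    sub (S n) i = sub (S k) m).
  { intros k n Hkn. induction Hkn; intro i.
    - exists i. split; auto.
    - destruct (IHHkn (pick (S m, sub (S m)) i)) as [m' [Hm' E]].
      exists m'. split; [|rewrite Esub; exact E].
      pose proof (strict_mono_ge _ (proj1 (Hpick (S m, sub (S m)))) i). lia. }
  exists (fun n => sub (S n) n). split.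
  - intro n. rewrite (Esub (S n) (S n)).
    pose proof (strict_mono_ge _ (proj1 (Hpick (S n, sub (S n)))) (S n)).
    apply strict_mono_lt; [apply Sinc|lia].
  - intro k. destruct (Hpick (k, sub k)) as [_ [y Hy]]. exists y.
    intros e He. destruct (Hy e He) as [N HN]. exists (Nat.max N k). intros n Hn.
    destruct (Hsub k n ltac:(lia) n) as [m [Hmm E]]. rewrite E, Esub.
    apply HN. lia.
Qed.

(* An enumeration of the rationals [(a - b) / (q + 1)], a countable dense set. *)
Definition rat_enum (k : nat) : R :=
  let (p, q) := Cantor.of_nat k in let (a, b) := Cantor.of_nat p in
  (INR a - INR b) / INR (S q).

Lemma rat_enum_dense (t e : R) : 0 < e -> exists k, Rabs (rat_enum k - t) < e.
Proof.
  intros He.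
  destruct (nat_above (/ e)) as [q Hq0]. specialize (Hq0 q (le_n _)).
  set (Q := INR (S q)).
  assert (Hq : / e < Q) by (unfold Q; rewrite S_INR; lra).
  assert (HQ : 0 < Q) by (unfold Q; apply lt_0_INR; lia).
  destruct (archimed (t * Q)) as [H2 H3].
  set (m := (up (t * Q) - 1)%Z).
  assert (Hm1 : IZR m <= t * Q) by (unfold m; rewrite minus_IZR; lra).
  assert (Hm2 : t * Q < IZR m + 1) by (unfold m; rewrite minus_IZR; lra).
  exists (Cantor.to_nat (Cantor.to_nat (Z.to_nat m, Z.to_nat (- m)), q)).
  unfold rat_enum. rewrite !Cantor.cancel_of_to. fold Q.
  assert (Eab : INR (Z.to_nat m) - INR (Z.to_nat (- m)) = IZR m).
  { rewrite !INR_IZR_INZ. destruct (Z_le_gt_dec 0 m).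
    - rewrite Z2Nat.id by lia. replace (Z.to_nat (- m)) with 0%nat by lia. simpl. lra.
    - rewrite (Z2Nat.id (- m)) by lia. replace (Z.to_nat m) with 0%nat by lia.
      rewrite opp_IZR. simpl. lra. }
  rewrite Eab.
  assert (HeQ : 1 < e * Q).
  { apply Rmult_lt_reg_r with (/ e); [apply Rinv_0_lt_compat; auto|].
    replace (e * Q * / e) with Q by (field; lra). lra. }
  assert (E1 : IZR m / Q - t = - ((t * Q - IZR m) / Q)) by (field; lra).
  rewrite E1, Rabs_Ropp, Rabs_pos_eq.
  - apply Rmult_lt_reg_r with Q; auto. unfold Rdiv. rewrite Rmult_assoc, Rinv_l by lra. lra.
  - assert (0 < / Q) by (apply Rinv_0_lt_compat; auto). unfold Rdiv. nra.
Qed.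

Lemma conv_from_rationals (F : nat -> R -> X) :
  (forall n s t, d (F n s) (F n t) <= Rabs (s - t)) ->
  (forall k, exists y, conv (fun n => F n (rat_enum k)) y) ->
  forall t, exists y, conv (fun n => F n t) y.
Proof.
  intros Hlip Hk t. apply cauchy_conv. intros e He.
  destruct (rat_enum_dense t (e/4) ltac:(lra)) as [k Hkt].
  destruct (Hk k) as [y Hy]. destruct (Hy (e/4) ltac:(lra)) as [N HN].
  exists N. intros n m Hn Hmm.
  pose proof (Hlip n t (rat_enum k)). pose proof (Hlip m (rat_enum k) t).
  specialize (HN n Hn) as A1. specialize (HN m Hmm) as A2. simpl in A1, A2.
  rewrite Rabs_minus_sym in Hkt. rewrite (Rabs_minus_sym (rat_enum k) t) in *.
  pose proof (dtri (F n t) (F n (rat_enum k)) y).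
  pose proof (dtri (F n t) y (F m (rat_enum k))).
  pose proof (dtri (F n t) (F m (rat_enum k)) (F m t)).
  rewrite (dsym y (F m (rat_enum k))) in *. lra.
Qed.

Lemma conv_geodesic_line (F : nat -> R -> X) (c : R -> X) :
  (forall s t, exists N, forall n, (N <= n)%nat -> d (F n s) (F n t) = Rabs (s - t)) ->
  (forall t, conv (fun n => F n t) (c t)) -> geodesic_line d c.
Proof.
  intros Hex Hcc s t. apply eq_by_eps. intros e He.
  destruct (Hex s t) as [N HN].
  destruct (Hcc s (e/2) ltac:(lra)) as [N1 H1].
  destruct (Hcc t (e/2) ltac:(lra)) as [N2 H2].
  set (n := Nat.max N (Nat.max N1 N2)).
  specialize (H1 n ltac:(lia)). specialize (H2 n ltac:(lia)). specialize (HN n ltac:(lia)).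
  simpl in H1, H2.
  pose proof (dtri (c s) (F n s) (c t)). pose proof (dtri (F n s) (F n t) (c t)).
  pose proof (dtri (F n s) (c s) (c t)). pose proof (dtri (c s) (c t) (F n t)).
  pose proof (dtri (F n s) (c s) (F n t)).
  rewrite (dsym (c s) (F n s)) in *. rewrite (dsym (c t) (F n t)) in *.
  apply Rabs_le. split; lra.
Qed.

(* Arzela-Ascoli for geodesics: uniformly bounded 1-Lipschitz maps [f n : R -> X]
   which are eventually isometric on every pair of parameters have a subsequence
   converging pointwise to a geodesic line. *)
Lemma geodesic_line_limit (f : nat -> R -> X) (o : X) (B0 : R) :
  (forall n s t, d (f n s) (f n t) <= Rabs (s - t)) ->
  (forall n t, d o (f n t) <= B0 + Rabs t) ->
  (forall s t, exists N, forall n, (N <= n)%nat -> d (f n s) (f n t) = Rabs (s - t)) ->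
  exists (phi : nat -> nat) (c : R -> X), (forall n, (phi n < phi (S n))%nat) /\
    geodesic_line d c /\ forall t, conv (fun n => f (phi n) t) (c t).
Proof.
  intros Hlip Hbd Hex.
  destruct (diagonal_extraction (fun k n => f n (rat_enum k))) as [phi [Hphi Hk]].
  { intro k. exists o, (B0 + Rabs (rat_enum k)). intro n. apply Hbd. }
  pose proof (conv_from_rationals (fun n => f (phi n)) (fun n => Hlip (phi n)) Hk) as Hc.
  destruct (choice (fun t y => conv (fun n => f (phi n) t) y) Hc) as [c Hcc].
  exists phi, c. split; [exact Hphi|split; [|exact Hcc]].
  apply (conv_geodesic_line (fun n => f (phi n)) c); [|exact Hcc].
  intros s t. destruct (Hex s t) as [N HN]. exists N. intros n Hn.
  apply HN. pose proof (strict_mono_ge phi Hphi n). lia.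
Qed.

(* For [x] of minimal displacement, choose geodesics [S_n] from [x_{-(n+1)}] to
   [x_{n+1}] and reparametrize them so that [0] corresponds to the projection of [x].
   A subsequence converges to a geodesic line [c] with [d(x, c 0) <= 5 delta / 2];
   its two halves are approximated rays, hence converge to [h^+] and [h^-]. *)

Section Axis.
Variables h hi : X -> X.
Hypothesis Hhhi : forall x, h (hi x) = x.
Hypothesis Hhih : forall x, hi (h x) = x.
Hypothesis Hiso : is_isometry d h.
Variable x : X.
Hypothesis Hmin : forall z, d x (h x) <= d z (h z).
Hypothesis Hs : 3 * delta < d x (h x).

Notation orb k := (zpow h hi k x).

Let Hmin0 : forall z, d x (h x) <= d z (h z) + 0.
Proof. intro z. rewrite Rplus_0_r. apply Hmin. Qed.
Let Hs0 : 3 * delta + 0 < d x (h x).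
Proof. lra. Qed.
Let Hmin0' : forall z, d x (hi x) <= d z (hi z) + 0.
Proof. intro z. rewrite !(disp_inv h hi Hhhi Hiso). apply Hmin0. Qed.
Let Hs0' : 3 * delta + 0 < d x (hi x).
Proof. rewrite (disp_inv h hi Hhhi Hiso). exact Hs0. Qed.

Notation J n := (Z.of_nat (S n)).
(* the length of [S_n] and the parameter of the projection of [x] on it *)
Notation D n := (d (orb (- J n)) (orb (J n))).
Notation tau n := (gp (orb (- J n)) x (orb (J n))).

Variable Sf : nat -> R -> X.
Hypothesis HSf : forall n, geodesic_segment d (orb (- J n)) (orb (J n)) (Sf n).
(* [S_n] recentred at the projection of [x] and extended by constants. *)
Let f (n : nat) (t : R) : X := Sf n (clamp (D n) (tau n + t)).

Let tau_range n : 0 <= tau n <= D n.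
Proof. split; [apply gp_nonneg|apply gp_le']. Qed.

Let f_lip n s t : d (f n s) (f n t) <= Rabs (s - t).
Proof.
  unfold f. rewrite (seg_lip _ _ _ _ _ (HSf n)) by (apply clamp_range; apply dpos).
  replace (s - t) with ((tau n + s) - (tau n + t)) by ring. apply clamp_lip, dpos.
Qed.

Let f_bounded n t : d x (f n t) <= 5 * delta / 2 + Rabs t.
Proof.
  pose proof (orbit_near_projection h hi Hhhi Hhih Hiso x 0 Hmin0 Hs0 (- J n) 0 (J n) (Sf n)
    ltac:(lia) (HSf n)) as Hnear.
  pose proof (dtri x (Sf n (tau n)) (f n t)).
  pose proof (f_lip n 0 t) as L. unfold f at 1 in L.
  rewrite Rplus_0_r, clamp_id in L by apply tau_range.
  rewrite Rminus_0_l, Rabs_Ropp in L. change (orb 0) with x in Hnear.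
  lra.
Qed.

Let center_far r : exists N, forall n, (N <= n)%nat -> r <= tau n /\ r <= D n - tau n.
Proof.
  destruct (orbit_unbounded h hi Hhhi Hhih Hiso x 0 Hmin0 Hs0 (r + 3 * delta / 2)) as [M HM].
  exists (Z.to_nat M). intros n Hn. specialize (HM (J n) ltac:(lia)).
  pose proof (center_param_lb h hi Hhhi Hhih Hiso x 0 Hmin0 Hs0 (J n) ltac:(lia)).
  pose proof (center_param_lb' h hi Hhhi Hhih Hiso x 0 Hmin0 Hs0 (J n) ltac:(lia)).
  lra.
Qed.

Let f_unclamped t : exists N, forall n, (N <= n)%nat -> f n t = Sf n (tau n + t).
Proof.
  destruct (center_far (Rabs t)) as [N HN]. exists N. intros n Hn.
  destruct (HN n Hn). pose proof (Rle_abs t). pose proof (Rle_abs (- t)). rewrite Rabs_Ropp in *.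
  unfold f. rewrite clamp_id by lra. reflexivity.
Qed.

Let f_eventually_iso s t : exists N, forall n, (N <= n)%nat -> d (f n s) (f n t) = Rabs (s - t).
Proof.
  destruct (center_far (Rabs s + Rabs t)) as [N HN]. exists N. intros n Hn.
  destruct (HN n Hn) as [HN1 HN2]. pose proof (Rabs_pos s). pose proof (Rabs_pos t).
  pose proof (Rle_abs s). pose proof (Rle_abs t). pose proof (Rle_abs (- s)). pose proof (Rle_abs (- t)).
  rewrite Rabs_Ropp in *.
  unfold f. rewrite !clamp_id by lra. rewrite (seg_lip _ _ _ _ _ (HSf n)) by lra.
  f_equal. ring.
Qed.

Section LimitLine.
Variable phi : nat -> nat.
Hypothesis Hphi : forall n, (phi n < phi (S n))%nat.
Variable c : R -> X.
Hypothesis Hconv : forall t, conv (fun n => f (phi n) t) (c t).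

Let limit_approx t e M : 0 < e -> exists p,
  (M <= J (phi p))%Z /\ d (Sf (phi p) (tau (phi p) + t)) (c t) < e.
Proof.
  intros He. destruct (Hconv t e He) as [P1 HP1]. destruct (f_unclamped t) as [P2 HP2].
  exists (Nat.max (Nat.max P1 P2) (Z.to_nat M)).
  pose proof (strict_mono_ge phi Hphi (Nat.max (Nat.max P1 P2) (Z.to_nat M))).
  split; [lia|]. rewrite <- HP2 by lia. apply HP1. lia.
Qed.

Lemma limit_ray_pos : approximated_ray h hi x c.
Proof.
  intros t e M Ht He. destruct (limit_approx t e M He) as [p [Hp Hd]].
  exists (J (phi p)), (Sf (phi p)). split; [exact Hp|]. split; [apply HSf|exact Hd].
Qed.

Lemma limit_ray_neg : approximated_ray hi h x (fun t => c (- t)).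
Proof.
  intros t e M Ht He. destruct (limit_approx (- t) e M He) as [p [Hp Hd]].
  set (q := phi p) in *.
  exists (J q), (fun u => Sf q (D q - u)). split; [exact Hp|].
  rewrite !(zpow_swap h hi), Z.opp_involutive. split; [apply seg_rev, HSf|].
  replace (D q - (gp (orb (J q)) x (orb (- J q)) + t)) with (tau q + - t); [exact Hd|].
  pose proof (gp_comp (orb (- J q)) (orb (J q)) x) as E.
  rewrite (gp_sym (orb (- J q)) (orb (J q)) x), (gp_sym (orb (J q)) (orb (- J q)) x) in E.
  lra.
Qed.

End LimitLine.

Lemma axis_from_segments : exists c, axis_line d h hi c /\ d x (c 0) <= 5 * delta / 2.
Proof.
  pose proof (delta_nonneg x) as Hd0.
  destruct (geodesic_line_limit f x (5 * delta / 2) f_lip f_bounded f_eventually_iso)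
    as [phi [c [Hphi [Hline Hconv]]]].
  assert (Hc0 : d x (c 0) <= 5 * delta / 2).
  { apply le_by_eps. intros e He. destruct (Hconv 0 e He) as [P HP].
    pose proof (f_bounded (phi P) 0). rewrite Rabs_R0 in H. specialize (HP P (le_n P)).
    pose proof (dtri x (f (phi P) 0) (c 0)). simpl in HP. lra. }
  exists c. split; [|exact Hc0]. split; [exact Hline|split].
  - apply (approximated_ray_limit h hi Hhhi Hhih Hiso x 0 Hmin0 Hs0); [lra|].
    apply (limit_ray_pos phi Hphi c Hconv).
  - pose proof (approximated_ray_limit hi h Hhih Hhhi (inv_iso h hi Hhhi Hiso) x 0 Hmin0' Hs0'
      (fun t => c (- t))) as L.
    cbv beta in L. rewrite Ropp_0 in L. apply L; [lra|]. apply (limit_ray_neg phi Hphi c Hconv).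
Qed.

End Axis.

Lemma axis_near_minimal_point h hi x :
  (forall y, h (hi y) = y) -> (forall y, hi (h y) = y) -> is_isometry d h ->
  (forall z, d x (h x) <= d z (h z)) -> 3 * delta < d x (h x) ->
  exists c, axis_line d h hi c /\ d x (c 0) <= 5 * delta / 2.
Proof.
  intros Hhhi Hhih Hiso Hmin Hs.
  destruct (choice (fun (n : nat) (Sn : R -> X) => geodesic_segment d
     (zpow h hi (- Z.of_nat (S n)) x) (zpow h hi (Z.of_nat (S n)) x) Sn)
     (fun n => seg_exists _ _)) as [Sf HSf].
  exact (axis_from_segments h hi Hhhi Hhih Hiso x Hmin Hs Sf HSf).
Qed.

Section MinimalPoints.
Variables h hi : X -> X.
Hypothesis Hhhi : forall x, h (hi x) = x.
Hypothesis Hhih : forall x, hi (h x) = x.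
Hypothesis Hiso : is_isometry d h.

Notation zp := (zpow h hi).
Let ziso := zp_iso h hi Hhhi Hhih Hiso.

Lemma orbit_path_disp y sig k v : geodesic_segment d y (h y) sig -> 0 <= v <= d y (h y) ->
  d (zp k (sig v)) (h (zp k (sig v))) <= d y (h y).
Proof.
  intros Hsig Hv. rewrite (zp_disp h hi Hhhi Hhih Hiso).
  destruct (seg_dist _ _ _ v Hsig Hv) as [E1 E2].
  pose proof (dtri (sig v) (h y) (h (sig v))). rewrite Hiso in H. lra.
Qed.

(* Two almost minimally displaced points [ys], [y]: some translate of [y] lies in a ball
   around [ys] whose radius does not depend on [y].  Indeed the projection of [y] on a
   long geodesic [y_{-N} y_N] is, by [near_orbit_path_far_ends], close to a translate of
   [[ys, h ys]]. *)
Lemma translate_close ys y eps :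
  (forall z, d ys (h ys) <= d z (h z) + eps) -> 3 * delta + eps < d ys (h ys) ->
  (forall z, d y (h y) <= d z (h z) + eps) -> 3 * delta + eps < d y (h y) ->
  exists k, d (zp k y) ys <= 9 * delta + eps + d ys (h ys).
Proof.
  intros Hn1 Hs1 Hn2 Hs2. pose proof (delta_nonneg y) as Hd0. pose proof (Hn2 y) as He0.
  destruct (seg_exists ys (h ys)) as [sig Hsig].
  set (L0 := d y ys).
  destruct (orbit_unbounded h hi Hhhi Hhih Hiso y eps Hn2 Hs2 (L0 + 5 * delta + eps + 1))
    as [M HM].
  set (N := Z.max M 1). specialize (HM N ltac:(lia)).
  pose proof (orbit_dist_opp h hi Hhhi Hhih Hiso y N) as Hopp.
  destruct (seg_exists (zp (- N) y) (zp N y)) as [L HL].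
  set (tau := gp (zp (- N) y) y (zp N y)).
  pose proof (orbit_near_projection h hi Hhhi Hhih Hiso y eps Hn2 Hs2 (- N) 0 N L
    ltac:(lia) HL) as Hz. change (zp 0 y) with y in Hz. fold tau in Hz.
  assert (Htau : 0 <= tau <= d (zp (- N) y) (zp N y)) by (split; [apply gp_nonneg|apply gp_le']).
  assert (G1 : 2 * delta < gp (L tau) (zp (- N) y) (zp (- N) ys)).
  { pose proof (gp_lb (L tau) (zp (- N) y) (zp (- N) ys)). rewrite ziso in H. fold L0 in H.
    pose proof (dtri y (L tau) (zp (- N) y)). lra. }
  assert (G2 : 2 * delta < gp (L tau) (zp N y) (zp N ys)).
  { pose proof (gp_lb (L tau) (zp N y) (zp N ys)). rewrite ziso in H. fold L0 in H.
    pose proof (dtri y (L tau) (zp N y)). lra. }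
  destruct (near_orbit_path_far_ends h hi Hhhi Hhih Hiso ys eps Hn1 Hs1 sig N _ _ L tau
    Hsig ltac:(lia) HL Htau G1 G2) as [k [v [Hv Hd]]].
  exists (- k)%Z. rewrite (zp_back h hi Hhhi Hhih Hiso).
  assert (E3 : d (zp k (sig v)) (zp k ys) = v).
  { rewrite ziso. destruct (seg_dist _ _ _ v Hsig Hv) as [E _]. rewrite dsym. exact E. }
  pose proof (dtri y (L tau) (zp k (sig v))). pose proof (dtri y (zp k (sig v)) (zp k ys)).
  lra.
Qed.

(* The displacement function is lower semicontinuous (indeed 2-Lipschitz). *)
Lemma displacement_limit (a : nat -> X) w s0 : conv a w ->
  (forall n, d (a n) (h (a n)) <= s0 + / INR (S n)) -> d w (h w) <= s0.
Proof.
  intros Hcv Ha. apply le_by_eps. intros e He.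
  destruct (Hcv (e/3) ltac:(lra)) as [N1 HN1].
  destruct (inv_small (e/3) ltac:(lra)) as [N2 HN2].
  set (n := Nat.max N1 N2). specialize (HN1 n ltac:(lia)). specialize (HN2 n ltac:(lia)).
  specialize (Ha n).
  pose proof (dtri w (a n) (h w)). pose proof (dtri (a n) (h (a n)) (h w)).
  rewrite Hiso in H0. rewrite (dsym w (a n)) in H. lra.
Qed.

(* If all displacements exceed [l > 3 delta], the minimal displacement is attained:
   almost minimal points can be translated into a fixed ball, where properness applies. *)
Lemma minimal_point_exists (y0 : X) (l : R) : (forall y, l <= d y (h y)) -> 3 * delta < l ->
  exists w, forall y, d w (h w) <= d y (h y).
Proof.
  intros Hl H3. pose proof (delta_nonneg y0) as Hd0.
  destruct (inf_exists (fun y => d y (h y)) y0 (fun y => dpos y (h y))) as [s0 [Hinf Happ]].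
  assert (Hls : l <= s0).
  { apply le_by_eps. intros e He. destruct (Happ e He) as [y Hy]. specialize (Hl y). lra. }
  set (ef := (s0 - 3 * delta) / 2).
  assert (Hef : 0 < ef) by (unfold ef; lra).
  destruct (Happ ef Hef) as [ys Hys].
  assert (Hn : forall y, d y (h y) < s0 + ef ->
    (forall z, d y (h y) <= d z (h z) + ef) /\ 3 * delta + ef < d y (h y)).
  { intros y Hy. split; [intro z; specialize (Hinf z); lra|specialize (Hinf y); unfold ef in *; lra]. }
  destruct (Hn ys Hys) as [Hn1 Hs1].
  set (B := 9 * delta + ef + d ys (h ys)).
  assert (HW : forall n : nat, exists w, d w (h w) <= s0 + / INR (S n) /\ d ys w <= B).
  { intro n. assert (Hp : 0 < Rmin ef (/ INR (S n))).
    { apply Rmin_glb_lt; auto. apply Rinv_0_lt_compat, lt_0_INR. lia. }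
    destruct (Happ _ Hp) as [y Hy].
    pose proof (Rmin_l ef (/ INR (S n))). pose proof (Rmin_r ef (/ INR (S n))).
    destruct (Hn y ltac:(lra)) as [Hn2 Hs2].
    destruct (translate_close ys y ef Hn1 Hs1 Hn2 Hs2) as [k Hk].
    exists (zp k y). split; [rewrite (zp_disp h hi Hhhi Hhih Hiso); lra|rewrite dsym; exact Hk]. }
  destruct (choice _ HW) as [W HW'].
  destruct (Hprop W ys B (fun n => proj2 (HW' n))) as [phi [w [Hphi Hcv]]].
  exists w. intro y. specialize (Hinf y).
  enough (d w (h w) <= s0) by lra.
  apply (displacement_limit (fun n => W (phi n)) w s0 (Un_cv_conv _ _ Hcv)).
  intro n. destruct (HW' (phi n)) as [Hd _].
  assert (/ INR (S (phi n)) <= / INR (S n)); [|lra].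
  apply Rinv_le_contravar; [apply lt_0_INR; lia|].
  apply le_INR. pose proof (strict_mono_ge phi Hphi n). lia.
Qed.

(* Every point of an axis is within [13 delta / 2] of a minimally displaced point: the
   ends of a long piece of the axis around it are far on the sides of [y_N] and [y_{-N}],
   so it is close to the broken line through the orbit of a minimal point [y0]. *)
Lemma minimal_point_near_axis y0 c t0 :
  (forall z, d y0 (h y0) <= d z (h z)) -> 3 * delta < d y0 (h y0) ->
  axis_line d h hi c -> exists a, (forall y, d a (h a) <= d y (h y)) /\ d (c t0) a <= 13 * delta / 2.
Proof.
  intros Hmin Hs [Hline [Hpos Hneg]].
  assert (Hmin0 : forall z, d y0 (h y0) <= d z (h z) + 0) by (intro z; rewrite Rplus_0_r; apply Hmin).
  assert (Hs0 : 3 * delta + 0 < d y0 (h y0)) by lra.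
  destruct (seg_exists y0 (h y0)) as [sig Hsig].
  destruct (same_limit_gp_lb _ _ (fun n => Nat.iter n h y0) (c t0) (2 * delta) (d (c 0) y0) Hpos
    (fun n => Req_le _ _ (iter_iso h hi Hhhi Hhih Hiso n (c 0) y0))) as [N1 HN1].
  destruct (same_limit_gp_lb _ _ (fun n => Nat.iter n hi y0) (c t0) (2 * delta) (d (c 0) y0) Hneg
    (fun n => Req_le _ _ (iter_inv_iso h hi Hhhi Hhih Hiso n (c 0) y0))) as [N2 HN2].
  destruct (nat_above (Rabs t0)) as [N3 HN3].
  set (N := Nat.max 1 (Nat.max (Nat.max N1 N2) N3)).
  specialize (HN1 N ltac:(lia)). specialize (HN2 N ltac:(lia)). specialize (HN3 N ltac:(lia)).
  rewrite <- (zp_nat X h hi) in HN1. rewrite <- (zp_negnat X h hi) in HN2.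
  pose proof (Rle_abs t0). pose proof (Rle_abs (- t0)). rewrite Rabs_Ropp in *.
  destruct (line_segment c (INR N) Hline (pos_INR N)) as [HL DL].
  assert (Ex : c (- INR N + (t0 + INR N)) = c t0) by (f_equal; ring).
  pose proof (near_orbit_path_far_ends h hi Hhhi Hhih Hiso y0 0 Hmin0 Hs0 sig (Z.of_nat N)
    _ _ _ (t0 + INR N) Hsig ltac:(lia) HL ltac:(lra)) as Hnear.
  cbv beta in Hnear. rewrite Ex in Hnear.
  destruct (Hnear HN2 HN1) as [k [v [Hv Hd]]].
  exists (zp k (sig v)). split; [|lra].
  intro y. pose proof (orbit_path_disp y0 sig k v Hsig Hv). specialize (Hmin y). lra.
Qed.

End MinimalPoints.

End Limits.
End Hyperbolic.

Lemma iter_disp X (d : X -> X -> R) (g : X -> X) : is_isometry d g ->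
  forall n y, d (Nat.iter n g y) (g (Nat.iter n g y)) = d y (g y).
Proof. intros Hg n y. induction n as [|n IH]; [reflexivity|]. simpl. rewrite Hg. exact IH. Qed.

Lemma asymptotic_le_displacement X (d : X -> X -> R) (g : X -> X) (l : R) :
  metric X d -> is_isometry d g ->
  (forall x, Un_cv (fun k => d x (Nat.iter (S k) g x) / INR (S k)) l) ->
  forall y, l <= d y (g y).
Proof.
  intros Hm Hg Hcv y.
  assert (Hn : forall n, d y (Nat.iter n g y) <= INR n * d y (g y)).
  { induction n as [|n IH].
    - simpl. rewrite (dxx X d Hm). lra.
    - rewrite S_INR. simpl.
      pose proof (dtri X d Hm y (Nat.iter n g y) (g (Nat.iter n g y))).
      pose proof (iter_disp X d g Hg n y). lra. }
  apply le_by_eps. intros e He.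
  destruct (Hcv y e He) as [N HN]. specialize (HN N (le_n N)). unfold Rdist in HN.
  apply Rabs_def2 in HN. specialize (Hn (S N)).
  assert (HS : 0 < INR (S N)) by (apply lt_0_INR; lia).
  assert (d y (Nat.iter (S N) g y) / INR (S N) <= d y (g y)); [|lra].
  apply Rmult_le_reg_r with (INR (S N)); auto.
  unfold Rdiv. rewrite Rmult_assoc, Rinv_l by lra. lra.
Qed.

Theorem mainTheorem5 (X : Type) (d : X -> X -> R) (delta : R)
  (g ginv : X -> X) (l : R) :
  hyperbolic_space d delta ->
  (forall x, g (ginv x) = x) -> (forall x, ginv (g x) = x) ->
  is_isometry d g ->
  hyperbolic_isometry d g ginv ->
  (forall x, Un_cv (fun k => d x (Nat.iter (S k) g x) / INR (S k)) l) ->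
  3 * delta < l ->
  (forall x, in_Mmin d g x -> dist_set_le d (in_M d g ginv) x (7 / 2 * delta)) /\
  (forall x, in_M d g ginv x -> dist_set_le d (in_Mmin d g) x (15 / 2 * delta)).
Proof.
  intros [Hm [Hprop [Hgeo Hthin]]] Hggi Hgig Hiso _ Hcv Hl3.
  pose proof (asymptotic_le_displacement X d g l Hm Hiso Hcv) as Hl.
  split.
  - (* (i): a minimal point is within [5 delta / 2] of the axis built through it *)
    intros x Hx eps Heps. pose proof (delta_nonneg X d delta Hm Hgeo Hthin x).
    destruct (axis_near_minimal_point X d delta Hm Hgeo Hthin Hprop g ginv x Hggi Hgig Hiso
      Hx ltac:(specialize (Hl x); lra)) as [c [Hc Hd]].
    exists (c 0). split; [exists c; split; [exact Hc|exists 0; reflexivity]|lra].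
  - (* (ii): a minimal point exists, and then every axis point is [13 delta / 2]-close to one *)
    intros x [c [Hc [t <-]]] eps Heps. pose proof (delta_nonneg X d delta Hm Hgeo Hthin (c t)).
    destruct (minimal_point_exists X d delta Hm Hgeo Hthin Hprop g ginv Hggi Hgig Hiso (c t) l
      Hl Hl3)
      as [w Hw].
    destruct (minimal_point_near_axis X d delta Hm Hgeo Hthin g ginv Hggi Hgig Hiso w c t Hw
      ltac:(specialize (Hl w); lra) Hc) as [a [Ha Hd]].
    exists a. split; [exact Ha|lra].
Qed.
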